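(* Let $\mathcal H_A,\mathcal H_B$ be finite-dimensional Hilbert spaces, $|0_A\rangle\in\mathcal H_A$, $|0_B\rangle\in\mathcal H_B$ unit vectors, $|0\rangle=|0_A\rangle\otimes|0_B\rangle$, and let $|\phi\rangle\in\mathcal H_A\otimes\mathcal H_B$ be a unit vector. Decompose $|\phi\rangle=|x\rangle\otimes|0_B\rangle+|y\rangle$ with $|x\rangle=(\mathbb 1_A\otimes\langle 0_B|)|\phi\rangle$ and $(\mathbb 1_A\otimes\langle 0_B|)|y\rangle=0$, and assume $|y\rangle\neq0$. Fix $0<\epsilon<1$, let $|\psi\rangle=(|0\rangle+\epsilon|\phi\rangle)/\sqrt{\mathcal N}$ with $\mathcal N=1+\epsilon^2+2\epsilon\,\mathrm{Re}\langle0|\phi\rangle$, $\rho_A=\operatorname{tr}_B|\psi\rangle\langle\psi|$, $\mu=\epsilon^2\langle y|y\rangle/\mathcal N$ and $\omega=\operatorname{tr}_B|y\rangle\langle y|/\langle y|y\rangle$. Then for every $0<\alpha<1$, $$\mu^\alpha\operatorname{tr}\omega^\alpha\le\operatorname{tr}\rho_A^\alpha\le(1-\mu)^\alpha+\mu^\alpha\operatorname{tr}\omega^\alpha,$$ equivalently $$S_\alpha(\omega)+\frac{\alpha}{1-\alpha}\log\mu\le S_\alpha(\rho_A)\le\frac{1}{1-\alpha}\log\Big[(1-\mu)^\alpha+\mu^\alpha e^{(1-\alpha)S_\alpha(\omega)}\Big].$$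
   Context: $S_\alpha(\rho)=\frac{1}{1-\alpha}\log\operatorname{tr}\rho^\alpha$. One has $\rho_A=(1-\mu)|v\rangle\langle v|+\mu\,\omega$ with $|v\rangle=(|0_A\rangle+\epsilon|x\rangle)/\sqrt{\mathcal N(1-\mu)}$ a unit vector. *)

From HB Require Import structures.
From mathcomp Require Import all_boot all_order all_algebra.
From mathcomp Require Import complex mxtens.
From mathcomp Require Import reals sequences exp.
Set Implicit Arguments. Unset Strict Implicit. Unset Printing Implicit Defensive.
Import Order.TTheory GRing.Theory Num.Theory.
Local Open Scope ring_scope.

Section QDefs.
Variable R : realType.
Local Notation C := (R[i]).

Definition adj {p q : nat} (M : 'M[C]_(p, q)) : 'M[C]_(q, p) := (map_mx conjc M)^T.

Definition braket {p : nat} (u v : 'cV[C]_p) : C := (adj u *m v) 0 0.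

Definition ketbra {p : nat} (u v : 'cV[C]_p) : 'M[C]_p := u *m adj v.

Definition tket {m n : nat} (a : 'cV[C]_m) (b : 'cV[C]_n) : 'cV[C]_(m * n) :=
  tensmx a b.

Definition ptraceB {m n : nat} (M : 'M[C]_(m * n)) : 'M[C]_m :=
  \matrix_(i < m, i' < m)
     \sum_(j < n) M (mxtens_index (i, j)) (mxtens_index (i', j)).

Definition contractB {m n : nat} (b : 'cV[C]_n) (phi : 'cV[C]_(m * n)) : 'cV[C]_m :=
  \col_(i < m) \sum_(j < n) conjc (b j 0) * phi (mxtens_index (i, j)) 0.

(* tr rho^alpha for a Hermitian (normal) matrix rho : sum of lambda_i^alpha over
   its eigenvalues (with multiplicity), via the spectral decomposition *)
Definition trpow {p : nat} (rho : 'M[C]_p) (alpha : R) : R :=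
  \sum_(i < p) powR (complex.Re (spectral_diag rho 0 i)) alpha.

Definition renyi {p : nat} (alpha : R) (rho : 'M[C]_p) : R :=
  (1 - alpha)^-1 * ln (trpow rho alpha).

End QDefs.

From HB Require Import structures.
From mathcomp Require Import all_boot all_order all_algebra.
From mathcomp Require Import complex mxtens.
From mathcomp Require Import reals sequences exp.
From mathcomp Require Import ring lra.
Import Order.TTheory GRing.Theory Num.Theory.
Local Open Scope ring_scope.
Set Implicit Arguments. Unset Strict Implicit.

(* Up to normalization, |0> + eps|phi> = (|0_A> + eps|x>) (x) |0_B> + eps|y> with
   |y> orthogonal to H_A (x) |0_B>, so rho_A = u u^* + mu omega, where
   |u|^2 = 1 - mu and omega = Z Z^* is a density matrix.  Both bounds are
   statements about f(t) = t^alpha, concave with f(0) = 0, and reduce to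
   Jensen's inequality with doubly substochastic weights.  Lower bound: in the
   eigenbasis of rho_A, each eigenvalue of rho_A dominates a doubly stochastic
   average of those of mu omega.  Upper bound: rho_A = R R^* with
   R = [u | sqrt(mu) V], V V^* = omega, and the eigenvalues of R R^* are
   majorized by the diagonal of R^* R, i.e. by the squared column norms
   |u|^2 and mu lambda_j(omega). *)

Section PowRConcave.
Variable R : realType.
Variable a : R.
Hypothesis a01 : 0 < a < 1.

Lemma powR_le_affine (t : R) : 0 <= t -> t `^ a <= a * t + (1 - a).
Proof.
(* Young's inequality at [t^a] and [1], with conjugate exponents [1/a], [1/(1-a)]. *)
have /andP[a0 a1] := a01; move=> t0.
have conj_exps : a^-1^-1 + (1 - a)^-1^-1 = 1 by rewrite !invrK subrKC.
have := conjugate_powR (powR_ge0 t a) ler01 _ _ conj_exps.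
rewrite !invr_gt0 subr_gt0 a0 a1 mulr1 -powRrM divff ?gt_eqF // powRr1 //.
by rewrite powR1 !invrK mulrC mul1r; apply.
Qed.

Lemma sum_powR_le_powR_sum (I : finType) (w x : I -> R) :
  (forall i, 0 <= w i) -> (forall i, 0 <= x i) -> \sum_i w i <= 1 ->
  \sum_i w i * x i `^ a <= (\sum_i w i * x i) `^ a.
Proof.
have /andP[a0 a1] := a01; move=> w0 x0 w1.
set s := \sum_i w i * x i.
have s0 : 0 <= s by apply: sumr_ge0 => i _; rewrite mulr_ge0.
have [sz|sn0] := eqVneq s 0.
  have wx0 := psumr_eq0P (fun i _ => mulr_ge0 (w0 i) (x0 i)) sz.
  rewrite big1 ?powR_ge0 // => i _.
  have /eqP := wx0 i isT; rewrite mulf_eq0 => /orP[/eqP->|/eqP->].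
    by rewrite mul0r.
  by rewrite powR0 ?gt_eqF // mulr0.
have sp : 0 < s by rewrite lt_def sn0 s0.
(* [x_i^a = s^a (x_i/s)^a <= s^a (a x_i/s + 1 - a)], then sum against [w]. *)
apply: (@le_trans _ _ (\sum_i w i * (s `^ a * (a * (x i / s) + (1 - a))))).
  apply: ler_sum => i _; apply: ler_wpM2l => //.
  rewrite -{1}(divfK sn0 (x i)) mulrC powRM ?divr_ge0 //.
  by apply: ler_wpM2l; [exact: powR_ge0 | apply: powR_le_affine; rewrite divr_ge0].
have -> : \sum_i w i * (s `^ a * (a * (x i / s) + (1 - a)))
    = s `^ a * (a / s * s + (1 - a) * \sum_i w i).
  rewrite (eq_bigr (fun i => s `^ a * a / s * (w i * x i) + s `^ a * (1 - a) * w i)).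
    by rewrite big_split /= -!mulr_sumr -/s; ring.
  by move=> i _; ring.
rewrite divfK // -[X in _ <= X]mulr1; apply: ler_wpM2l; first exact: powR_ge0.
have : (1 - a) * \sum_i w i <= 1 - a by rewrite ler_piMr // subr_ge0 ltW.
lra.
Qed.

Lemma sum_powR_le_substochastic (I J : finType) (T : I -> J -> R) (x : J -> R) :
  (forall i j, 0 <= T i j) -> (forall j, 0 <= x j) ->
  (forall j, 0 < x j -> \sum_i T i j = 1) -> (forall i, \sum_j T i j <= 1) ->
  \sum_j x j `^ a <= \sum_i (\sum_j T i j * x j) `^ a.
Proof.
have /andP[a0 _] := a01; move=> T0 x0 Tcol Trow.
have spread j : \sum_i T i j * x j `^ a = x j `^ a.
  have [xj0|xj_gt0] := eqVneq (x j) 0.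
    by rewrite xj0 powR0 ?gt_eqF // big1 // => i _; rewrite mulr0.
  by rewrite -mulr_suml Tcol ?mul1r // lt_def xj_gt0 x0.
rewrite -(eq_bigr _ (fun j _ => spread j)) exchange_big /=.
by apply: ler_sum => i _; exact: sum_powR_le_powR_sum.
Qed.

End PowRConcave.

Section ComplexMatrices.
Variable R : realType.
Local Notation C := R[i].
Local Open Scope complex_scope.

Lemma real_complexM (x y : R) : (x * y)%:C = x%:C * y%:C :> C.
Proof. exact: rmorphM. Qed.

Lemma real_complex_sum (I : finType) (F : I -> R) :
  (\sum_i F i)%:C = \sum_i (F i)%:C :> C.
Proof. exact: rmorph_sum. Qed.

Definition sqnormc (z : C) : R := complex.Re z ^+ 2 + complex.Im z ^+ 2.

Lemma sqnormc_ge0 z : 0 <= sqnormc z.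
Proof. by rewrite addr_ge0 // sqr_ge0. Qed.

Lemma mulcJ_sqnormc z : z * z^* = (sqnormc z)%:C.
Proof.
case: z => u v; apply/eqP; rewrite eq_complex /sqnormc /=.
by apply/andP; split; apply/eqP; ring.
Qed.

Lemma mulJc_sqnormc z : z^* * z = (sqnormc z)%:C.
Proof. by rewrite mulrC mulcJ_sqnormc. Qed.

Lemma sqnormcM y z : sqnormc (y * z) = sqnormc y * sqnormc z.
Proof. by case: y => ? ?; case: z => ? ?; rewrite /sqnormc /=; ring. Qed.

Lemma sqnormc_real (r : R) : sqnormc r%:C = r ^+ 2.
Proof. by rewrite /sqnormc /= expr0n addr0. Qed.

Lemma sqnormc_eq0 z : sqnormc z = 0 -> z = 0.
Proof.
move=> z0; have /eqP : z * z^* = 0 by rewrite mulcJ_sqnormc z0.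
by rewrite mulf_eq0 conjc_eq0 orbb => /eqP.
Qed.

Lemma adjE p q (A : 'M[C]_(p, q)) i j : adj A i j = (A j i)^*.
Proof. by rewrite !mxE. Qed.

Lemma adjK p q (A : 'M[C]_(p, q)) : adj (adj A) = A.
Proof. by apply/matrixP => i j; rewrite !adjE conjcK. Qed.

Lemma adjM p q r (A : 'M[C]_(p, q)) (B : 'M[C]_(q, r)) :
  adj (A *m B) = adj B *m adj A.
Proof. by rewrite /adj map_mxM trmx_mul. Qed.

Lemma adjD p q (A B : 'M[C]_(p, q)) : adj (A + B) = adj A + adj B.
Proof. by apply/matrixP => i j; rewrite !mxE rmorphD. Qed.

Lemma adj_scale_real p q (r : R) (A : 'M[C]_(p, q)) :
  adj (r%:C *: A) = r%:C *: adj A.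
Proof. by apply/matrixP => i j; rewrite !mxE rmorphM /= oppr0. Qed.

Lemma adj0 p q : adj (0 : 'M[C]_(p, q)) = 0.
Proof. by apply/matrixP => i j; rewrite !mxE conjc0. Qed.

Lemma adj_row_mx p q1 q2 (A : 'M[C]_(p, q1)) (B : 'M[C]_(p, q2)) :
  adj (row_mx A B) = col_mx (adj A) (adj B).
Proof. by rewrite /adj map_row_mx tr_row_mx. Qed.

Lemma adj_diag_real p (d : 'I_p -> R) :
  adj (diag_mx (\row_k (d k)%:C)) = diag_mx (\row_k (d k)%:C).
Proof.
apply/matrixP => i j; rewrite adjE !mxE eq_sym.
have [->|_] := eqVneq i j; last by rewrite !mulr0n conjc0.
by rewrite !mulr1n conjc_real.
Qed.

End ComplexMatrices.

Section Gram.
Variable R : realType.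
Local Notation C := R[i].
Local Open Scope complex_scope.

Definition row_sqnorm p q (X : 'M[C]_(p, q)) (k : 'I_p) : R :=
  \sum_l sqnormc (X k l).

Definition col_sqnorm p q (X : 'M[C]_(p, q)) (l : 'I_q) : R :=
  \sum_k sqnormc (X k l).

Lemma row_sqnorm_ge0 p q (X : 'M[C]_(p, q)) k : 0 <= row_sqnorm X k.
Proof. by apply: sumr_ge0 => l _; exact: sqnormc_ge0. Qed.

Lemma col_sqnorm_ge0 p q (X : 'M[C]_(p, q)) l : 0 <= col_sqnorm X l.
Proof. by apply: sumr_ge0 => k _; exact: sqnormc_ge0. Qed.

Lemma col_sqnorm_cV_gt0 p (v : 'cV[C]_p) : v != 0 -> 0 < col_sqnorm v 0.
Proof.
move=> v_neq0; rewrite lt_def col_sqnorm_ge0 andbT; apply: contra v_neq0 => /eqP v0.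
apply/eqP/matrixP => k l; rewrite (ord1 l) mxE; apply: sqnormc_eq0.
by apply: (psumr_eq0P _ v0) => // i _; exact: sqnormc_ge0.
Qed.

Lemma sum_row_sqnorm p q (X : 'M[C]_(p, q)) :
  \sum_k row_sqnorm X k = \sum_l col_sqnorm X l.
Proof. exact: exchange_big. Qed.

Lemma mulmx_adj_diag p q (X : 'M[C]_(p, q)) k :
  (X *m adj X) k k = (row_sqnorm X k)%:C.
Proof.
rewrite mxE real_complex_sum.
by apply: eq_bigr => l _; rewrite adjE mulcJ_sqnormc.
Qed.

Lemma adj_mulmx_diag p q (X : 'M[C]_(p, q)) l :
  (adj X *m X) l l = (col_sqnorm X l)%:C.
Proof.
rewrite mxE real_complex_sum.
by apply: eq_bigr => k _; rewrite adjE mulJc_sqnormc.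
Qed.

Lemma row_sqnorm_unitary p (W : 'M[C]_p) k :
  W *m adj W = 1%:M -> row_sqnorm W k = 1.
Proof. by move=> WW1; apply: complexI; rewrite -mulmx_adj_diag WW1 mxE eqxx. Qed.

Lemma col_sqnorm_unitary p (W : 'M[C]_p) l :
  adj W *m W = 1%:M -> col_sqnorm W l = 1.
Proof. by move=> WW1; apply: complexI; rewrite -adj_mulmx_diag WW1 mxE eqxx. Qed.

Lemma col_sqnorm_isometry p q r (U : 'M[C]_(r, p)) (X : 'M[C]_(p, q)) l :
  adj U *m U = 1%:M -> col_sqnorm (U *m X) l = col_sqnorm X l.
Proof.
move=> UU1; apply: complexI.
by rewrite -!adj_mulmx_diag adjM mulmxA -(mulmxA (adj X)) UU1 mulmx1.
Qed.

Lemma col_sqnorm_scale p q (r : R) (X : 'M[C]_(p, q)) l :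
  col_sqnorm (r%:C *: X) l = r ^+ 2 * col_sqnorm X l.
Proof.
rewrite /col_sqnorm mulr_sumr; apply: eq_bigr => k _.
by rewrite mxE sqnormcM sqnormc_real.
Qed.

Lemma col_sqnorm_row_mxl p q1 q2 (X : 'M[C]_(p, q1)) (Y : 'M[C]_(p, q2)) l :
  col_sqnorm (row_mx X Y) (lshift q2 l) = col_sqnorm X l.
Proof. by apply: eq_bigr => k _; rewrite row_mxEl. Qed.

Lemma col_sqnorm_row_mxr p q1 q2 (X : 'M[C]_(p, q1)) (Y : 'M[C]_(p, q2)) l :
  col_sqnorm (row_mx X Y) (rshift q1 l) = col_sqnorm Y l.
Proof. by apply: eq_bigr => k _; rewrite row_mxEr. Qed.

Lemma adj_gram p q (X : 'M[C]_(p, q)) : adj (X *m adj X) = X *m adj X.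
Proof. by rewrite adjM adjK. Qed.

Lemma braketE p (u v : 'cV[C]_p) : braket u v = \sum_k (u k 0)^* * v k 0.
Proof. by rewrite /braket mxE; apply: eq_bigr => k _; rewrite adjE. Qed.

Lemma braket_sqnorm p (v : 'cV[C]_p) : braket v v = (col_sqnorm v 0)%:C.
Proof. exact: adj_mulmx_diag. Qed.

Lemma trmx_braket p (b : 'cV[C]_p) : b^T *m adj (b^T) = (braket b b)%:M.
Proof.
apply/matrixP => i j; rewrite (ord1 i) (ord1 j) !mxE mulr1n braketE.
by apply: eq_bigr => k _; rewrite !mxE mulrC.
Qed.

Lemma Re_braket_add p (u v : 'cV[C]_p) (e : R) :
  complex.Re (braket (u + e%:C *: v) (u + e%:C *: v))
    = complex.Re (braket u u) + e ^+ 2 * complex.Re (braket v v)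
      + 2 * e * complex.Re (braket u v).
Proof.
rewrite /braket adjD adj_scale_real mulmxDl !mulmxDr -!scalemxAl -!scalemxAr.
have -> : adj v *m u = adj (adj u *m v) by rewrite adjM adjK.
move: (adj u *m u) (adj u *m v) (adj v *m v) => A B D.
rewrite !mxE ?adjE; case: (A 0 0) => ? ?; case: (B 0 0) => ? ?; case: (D 0 0) => ? ?.
by rewrite /= !(mul0r, mulr0, subr0, addr0); ring.
Qed.

Lemma mxtrace_gram p q (X : 'M[C]_(p, q)) :
  \tr (X *m adj X) = (\sum_l col_sqnorm X l)%:C.
Proof.
rewrite -sum_row_sqnorm real_complex_sum; apply: eq_bigr => k _.
exact: mulmx_adj_diag.
Qed.

Section Spectral.
Local Open Scope sesquilinear_scope.

Lemma adj_tstar p q (M : 'M[C]_(p, q)) : adj M = M ^t*.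
Proof. by apply/matrixP => i j; rewrite !mxE. Qed.

Variables (p : nat) (A : 'M[C]_p).
Local Notation P := (spectralmx A).

Lemma spectralmx_unitary : P *m adj P = 1%:M.
Proof. by rewrite adj_tstar; apply/unitarymxP/spectral_unitarymx. Qed.

Lemma spectralmx_unitaryV : adj P *m P = 1%:M.
Proof. exact/mulmx1C/spectralmx_unitary. Qed.

Hypothesis A_herm : adj A = A.

Lemma hermitian_spectral_diag : P *m A *m adj P = diag_mx (spectral_diag A).
Proof.
have /orthomx_spectralP {2}-> : A \is normalmx.
  by apply/normalmxP; rewrite -adj_tstar A_herm.
rewrite invmx_unitary ?spectral_unitarymx // -adj_tstar.
by rewrite !mulmxA spectralmx_unitary mul1mx -mulmxA spectralmx_unitary mulmx1.
Qed.

Lemma hermitian_spectral_decomp : A = adj P *m diag_mx (spectral_diag A) *m P.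
Proof.
by rewrite -hermitian_spectral_diag !mulmxA spectralmx_unitaryV mul1mx -mulmxA
  spectralmx_unitaryV mulmx1.
Qed.

End Spectral.

Lemma spectral_diag_gram p q (Y : 'M[C]_(p, q)) :
  spectral_diag (Y *m adj Y)
    = \row_j (row_sqnorm (spectralmx (Y *m adj Y) *m Y) j)%:C.
Proof.
apply/rowP => j; rewrite mxE -mulmx_adj_diag adjM !mulmxA -(mulmxA _ Y).
by rewrite hermitian_spectral_diag ?adj_gram // mxE eqxx mulr1n.
Qed.

End Gram.

Section TracePower.
Variable R : realType.
Local Notation C := R[i].
Local Open Scope complex_scope.

Lemma projmx_diag_le1 p (E : 'M[C]_p) i :
  adj E = E -> E *m E = E -> complex.Re (E i i) <= 1.
Proof.
move=> E_herm E_idem.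
have Eii : E i i = (row_sqnorm E i)%:C by rewrite -mulmx_adj_diag E_herm E_idem.
have s0 := row_sqnorm_ge0 E i.
have : sqnormc (E i i) <= row_sqnorm E i.
  rewrite /row_sqnorm (bigD1 i) //= lerDl.
  by apply: sumr_ge0 => l _; exact: sqnormc_ge0.
rewrite Eii sqnormc_real /=; nra.
Qed.

Lemma col_sqnorm_diag p (d : 'rV[C]_p) l :
  col_sqnorm (diag_mx d) l = sqnormc (d 0 l).
Proof.
rewrite /col_sqnorm (bigD1 l) //= big1 ?addr0 => [|k kl].
  by rewrite mxE eqxx mulr1n.
by rewrite mxE (negbTE kl) mulr0n /sqnormc /= expr0n /= addr0.
Qed.

Lemma mulmx_diag_adj_diag p q (W : 'M[C]_(p, q)) (d : 'I_q -> R) k :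
  (W *m diag_mx (\row_j (d j)%:C) *m adj W) k k
    = (\sum_j sqnormc (W k j) * d j)%:C.
Proof.
rewrite mxE real_complex_sum; apply: eq_bigr => j _.
by rewrite mul_mx_diag !mxE real_complexM -mulcJ_sqnormc; ring.
Qed.

Variable a : R.
Hypothesis a01 : 0 < a < 1.

Lemma sum_powR_row_sqnorm_le p q (M : 'M[C]_(p, q)) (d : 'rV[C]_p) :
  M *m adj M = diag_mx d ->
  \sum_k row_sqnorm M k `^ a <= \sum_l col_sqnorm M l `^ a.
Proof.
move=> MM_diag.
pose n k := row_sqnorm M k.
have dE k : d 0 k = (n k)%:C.
  by rewrite -mulmx_adj_diag MM_diag mxE eqxx mulr1n.
pose T l k := sqnormc (M k l) / n k.
have T0 l k : 0 <= T l k by rewrite divr_ge0 ?sqnormc_ge0 ?row_sqnorm_ge0.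
have Tn l k : T l k * n k = sqnormc (M k l).
  have [nk0|nk_neq0] := eqVneq (n k) 0; last by rewrite divfK.
  rewrite nk0 mulr0; apply/esym/(psumr_eq0P _ nk0) => // j _; exact: sqnormc_ge0.
(* [sum_k T l k] is a diagonal entry of [M^* diag(1/n) M], the orthogonal
   projection onto the row space of [M]. *)
have Trow l : \sum_k T l k <= 1.
  pose D := diag_mx (\row_k ((n k)^-1)%:C).
  pose E := adj M *m D *m M.
  have Ell : E l l = (\sum_k T l k)%:C.
    rewrite mxE real_complex_sum; apply: eq_bigr => k _.
    by rewrite mul_mx_diag !mxE real_complexM -mulJc_sqnormc; ring.
  have DdD : D *m diag_mx d *m D = D.
    rewrite !mulmx_diag; congr diag_mx; apply/rowP => k; rewrite !mxE dE.
    have [->|nk_neq0] := eqVneq (n k) 0; first by rewrite invr0 !mulr0.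
    by rewrite -!real_complexM mulVf ?mul1r.
  have := @projmx_diag_le1 _ E l.
  rewrite Ell; apply.
    by rewrite !adjM adjK adj_diag_real mulmxA.
  rewrite /E -!mulmxA; congr (_ *m _).
  by rewrite !mulmxA -(mulmxA D M) MM_diag DdD.
have Tcol k : 0 < n k -> \sum_l T l k = 1.
  by move=> nk_gt0; rewrite -mulr_suml divff ?gt_eqF.
have n0 := @row_sqnorm_ge0 _ _ _ M.
apply: le_trans (sum_powR_le_substochastic a01 T0 n0 Tcol Trow) _.
apply: ler_sum => l _; apply: ge0_ler_powR; rewrite ?nnegrE ?(ltW (andP a01).1) //.
- by apply: sumr_ge0 => k _; rewrite mulr_ge0 ?row_sqnorm_ge0.
- exact: col_sqnorm_ge0.
- by rewrite (eq_bigr _ (fun k _ => Tn l k)).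
Qed.

Lemma trpow_gram_le p q (X : 'M[C]_(p, q)) :
  trpow (X *m adj X) a <= \sum_l col_sqnorm X l `^ a.
Proof.
set P := spectralmx (X *m adj X).
have PX_diag : (P *m X) *m adj (P *m X) = diag_mx (spectral_diag (X *m adj X)).
  by rewrite adjM !mulmxA -(mulmxA P) hermitian_spectral_diag ?adj_gram.
rewrite /trpow spectral_diag_gram.
under eq_bigr do rewrite mxE.
have colPX l : col_sqnorm (P *m X) l = col_sqnorm X l.
  exact/col_sqnorm_isometry/spectralmx_unitaryV.
under [X in _ <= X]eq_bigr do rewrite -colPX.
exact: sum_powR_row_sqnorm_le PX_diag.
Qed.

Section GramTrace.
Variables (p r : nat) (Y : 'M[C]_(p, r)).
Local Notation Q := (spectralmx (Y *m adj Y)).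
(* The eigenvalues of [Y Y^*], see [spectral_diag_gram]. *)
Local Notation lam := (row_sqnorm (Q *m Y)).

Lemma gram_spectral_decomp :
  Y *m adj Y = adj Q *m diag_mx (\row_j (lam j)%:C) *m Q.
Proof. by rewrite {1}(hermitian_spectral_decomp (adj_gram Y)) spectral_diag_gram. Qed.

Lemma trpow_gramE : trpow (Y *m adj Y) a = \sum_j lam j `^ a.
Proof. by rewrite /trpow spectral_diag_gram; under eq_bigr do rewrite mxE. Qed.

Lemma trpow_gram_gt0 : 0 < \sum_l col_sqnorm Y l -> 0 < trpow (Y *m adj Y) a.
Proof.
have sum_lam : \sum_j lam j = \sum_l col_sqnorm Y l.
  rewrite sum_row_sqnorm; apply: eq_bigr => l _.
  exact/col_sqnorm_isometry/spectralmx_unitaryV.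
move=> Y_gt0; rewrite trpow_gramE.
have [j lam_gt0|lam_le0] := pickP (fun j => 0 < lam j).
  rewrite (bigD1 j) //=; apply: lt_le_trans (powR_gt0 a lam_gt0) _.
  by rewrite lerDl sumr_ge0 // => i _; exact: powR_ge0.
have : \sum_j lam j = 0.
  by apply: big1 => j _; apply/eqP; rewrite eq_le row_sqnorm_ge0 andbT leNgt lam_le0.
by rewrite sum_lam => /eqP; rewrite gt_eqF.
Qed.

Section GramAdd.
Variables (q : nat) (X : 'M[C]_(p, q)) (c : R).
Hypothesis c0 : 0 <= c.

Lemma trpow_gram_add_ge :
  c `^ a * trpow (Y *m adj Y) a <= trpow (X *m adj X + c%:C *: (Y *m adj Y)) a.
Proof.
(* In the eigenbasis [P] of the sum, [Y Y^*] becomes [W diag(lam) W^*] with [W]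
   unitary, so the eigenvalues of the sum dominate a doubly stochastic average
   of the [c * lam j]. *)
set A := X *m adj X + _; set P := spectralmx A; pose W := P *m adj Q.
have WW1 : W *m adj W = 1%:M.
  by rewrite /W adjM adjK mulmxA -(mulmxA P) spectralmx_unitaryV mulmx1 spectralmx_unitary.
have WW1' : adj W *m W = 1%:M.
  by rewrite /W adjM adjK mulmxA -(mulmxA Q) spectralmx_unitaryV mulmx1 spectralmx_unitary.
have A_herm : adj A = A by rewrite /A adjD adj_scale_real !adj_gram.
have PAP : P *m A *m adj P
    = (P *m X) *m adj (P *m X) + c%:C *: (W *m diag_mx (\row_j (lam j)%:C) *m adj W).
  rewrite /A mulmxDr mulmxDl -(scalemxAr c%:C P) -(scalemxAl c%:C).
  by rewrite {1}gram_spectral_decomp /W !adjM adjK !mulmxA.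
have eigA k : complex.Re (spectral_diag A 0 k)
    = row_sqnorm (P *m X) k + c * \sum_j sqnormc (W k j) * lam j.
  have := congr1 (fun M : 'M[C]_p => M k k) (hermitian_spectral_diag A_herm).
  rewrite PAP [in RHS]mxE eqxx mulr1n => <-.
  rewrite [(_ + _ : 'M[C]_p) k k]mxE [(_ *: _ : 'M[C]_p) k k]mxE.
  by rewrite mulmx_adj_diag mulmx_diag_adj_diag -real_complexM.
rewrite trpow_gramE mulr_sumr.
under eq_bigr do rewrite -powRM ?row_sqnorm_ge0 //.
have lam0 j : 0 <= c * lam j by rewrite mulr_ge0 ?row_sqnorm_ge0.
have Wcol j : 0 < c * lam j -> \sum_k sqnormc (W k j) = 1.
  by move=> _; exact: col_sqnorm_unitary.
have Wrow k : \sum_j sqnormc (W k j) <= 1 by rewrite [leLHS]row_sqnorm_unitary.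
have W0 k j : 0 <= sqnormc (W k j) by exact: sqnormc_ge0.
apply: le_trans (sum_powR_le_substochastic a01 W0 lam0 Wcol Wrow) _.
apply: ler_sum => k _.
have mix0 : 0 <= \sum_j sqnormc (W k j) * (c * lam j).
  by apply: sumr_ge0 => j _; rewrite mulr_ge0 ?sqnormc_ge0.
have mix_le :
    \sum_j sqnormc (W k j) * (c * lam j) <= complex.Re (spectral_diag A 0 k).
  rewrite eigA (eq_bigr (fun j => c * (sqnormc (W k j) * lam j))).
    by rewrite -mulr_sumr lerDr row_sqnorm_ge0.
  by move=> j _; rewrite mulrCA.
by apply: ge0_ler_powR; rewrite ?nnegrE ?(ltW (andP a01).1) ?(le_trans mix0 mix_le).
Qed.

Lemma trpow_gram_add_le :
  trpow (X *m adj X + c%:C *: (Y *m adj Y)) a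
    <= \sum_l col_sqnorm X l `^ a + c `^ a * trpow (Y *m adj Y) a.
Proof.
(* [V = Q^* diag(sqrt (c lam))] is a square root of [c Y Y^*] whose columns have
   squared norms [c * lam j]; compare the sum with the column norms of [row_mx X V]. *)
have lam0 j : 0 <= c * lam j by rewrite mulr_ge0 ?row_sqnorm_ge0.
pose D := diag_mx (\row_j (Num.sqrt (c * lam j))%:C).
pose V := adj Q *m D.
have DD : D *m D = c%:C *: diag_mx (\row_j (lam j)%:C).
  apply/matrixP => i j; rewrite mulmx_diag !mxE -real_complexM -expr2 sqr_sqrtr //.
  by rewrite real_complexM mulrnAr.
have VV : V *m adj V = c%:C *: (Y *m adj Y).
  rewrite /V adjM adjK /D adj_diag_real mulmxA -(mulmxA (adj Q)) DD.
  by rewrite -(scalemxAr c%:C) -(scalemxAl c%:C) -gram_spectral_decomp.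
have colV j : col_sqnorm V j = c * lam j.
  rewrite /V col_sqnorm_isometry ?adjK ?spectralmx_unitary // col_sqnorm_diag mxE.
  by rewrite sqnormc_real sqr_sqrtr.
have := trpow_gram_le (row_mx X V).
rewrite adj_row_mx mul_row_col VV big_split_ord /= => /le_trans; apply.
rewrite trpow_gramE mulr_sumr.
under eq_bigr do rewrite col_sqnorm_row_mxl.
under [Z in _ + Z <= _]eq_bigr do
  rewrite col_sqnorm_row_mxr colV powRM ?row_sqnorm_ge0 //.
exact: lexx.
Qed.

End GramAdd.

End GramTrace.

End TracePower.

Lemma sum_mxtens (V : nmodType) m n (F : 'I_(m * n) -> V) :
  \sum_k F k = \sum_(i < m) \sum_(j < n) F (mxtens_index (i, j)).
Proof.
rewrite pair_big (reindex (@mxtens_index m n)) /=; last first.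
  by exists (@mxtens_unindex m n) => k _; rewrite (mxtens_indexK, mxtens_unindexK).
by apply: eq_bigr => -[i j].
Qed.

Section Bipartite.
Variable R : realType.
Local Notation C := R[i].
Local Open Scope complex_scope.

Variables m n : nat.

Definition ket_mx (v : 'cV[C]_(m * n)) : 'M[C]_(m, n) :=
  \matrix_(i, j) v (mxtens_index (i, j)) 0.

Lemma ket_mxD u v : ket_mx (u + v) = ket_mx u + ket_mx v.
Proof. by apply/matrixP => i j; rewrite !mxE. Qed.

Lemma ket_mxZ c v : ket_mx (c *: v) = c *: ket_mx v.
Proof. by apply/matrixP => i j; rewrite !mxE. Qed.

Lemma ket_mxB u v : ket_mx (u - v) = ket_mx u - ket_mx v.
Proof. by apply/matrixP => i j; rewrite !mxE. Qed.

Lemma tketE (a : 'cV[C]_m) (b : 'cV[C]_n) i j :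
  tket a b (mxtens_index (i, j)) 0 = a i 0 * b j 0.
Proof.
rewrite /tket /tensmx mxE mxtens_indexK.
by case: (mxtens_unindex _) => k l /=; rewrite (ord1 k) (ord1 l).
Qed.

Lemma ket_mx_tket (a : 'cV[C]_m) (b : 'cV[C]_n) : ket_mx (tket a b) = a *m b^T.
Proof.
apply/matrixP => i j; rewrite !mxE big_ord1 !mxE mxtens_indexK.
by case: (mxtens_unindex _) => k l /=; rewrite (ord1 k) (ord1 l).
Qed.

Lemma col_sqnorm_ket_mx v : col_sqnorm v 0 = \sum_l col_sqnorm (ket_mx v) l.
Proof.
rewrite -sum_row_sqnorm /col_sqnorm sum_mxtens.
by apply: eq_bigr => i _; apply: eq_bigr => j _; rewrite mxE.
Qed.

Lemma ptraceB_ketbra u v : ptraceB (ketbra u v) = ket_mx u *m adj (ket_mx v).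
Proof.
apply/matrixP => i i'; rewrite !mxE; apply: eq_bigr => j _.
by rewrite !mxE big_ord1 !mxE.
Qed.

Lemma contractB_ket_mx (b : 'cV[C]_n) v : contractB b v = ket_mx v *m adj (b^T).
Proof.
apply/matrixP => i k; rewrite (ord1 k) !mxE; apply: eq_bigr => j _.
by rewrite !mxE mulrC.
Qed.

Lemma tket_addl (a x : 'cV[C]_m) (b : 'cV[C]_n) c :
  tket (a + c *: x) b = tket a b + c *: tket x b.
Proof. by apply/matrixP => k l; rewrite !mxE mulrDl mulrA. Qed.

Lemma braket_tket (a a' : 'cV[C]_m) (b b' : 'cV[C]_n) :
  braket (tket a b) (tket a' b') = braket a a' * braket b b'.
Proof.
rewrite !braketE sum_mxtens mulr_suml; apply: eq_bigr => i _.
by rewrite mulr_sumr; apply: eq_bigr => j _; rewrite !tketE rmorphM; ring.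
Qed.

Lemma contractB_sub_tket (b : 'cV[C]_n) (v : 'cV[C]_(m * n)) :
  braket b b = 1 -> contractB b (v - tket (contractB b v) b) = 0.
Proof.
move=> b_unit; rewrite [LHS]contractB_ket_mx ket_mxB ket_mx_tket mulmxBl.
by rewrite -mulmxA trmx_braket b_unit mulmx1 -contractB_ket_mx subrr.
Qed.

Lemma ptraceB_tket_add (t : 'cV[C]_m) (b : 'cV[C]_n) (y : 'cV[C]_(m * n)) :
  braket b b = 1 -> contractB b y = 0 ->
  ptraceB (ketbra (tket t b + y) (tket t b + y))
    = t *m adj t + ptraceB (ketbra y y).
Proof.
move=> b_unit; rewrite contractB_ket_mx => yb0.
have by0 : b^T *m adj (ket_mx y) = 0 by rewrite -[b^T]adjK -adjM yb0 adj0.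
rewrite !ptraceB_ketbra ket_mxD ket_mx_tket adjD adjM mulmxDl !mulmxDr.
rewrite -!mulmxA (mulmxA (b^T)) trmx_braket b_unit mul1mx by0 mulmx0 addr0.
by rewrite !mulmxA yb0 mul0mx add0r.
Qed.

Lemma col_sqnorm_tket_add (t : 'cV[C]_m) (b : 'cV[C]_n) (y : 'cV[C]_(m * n)) :
  braket b b = 1 -> contractB b y = 0 ->
  col_sqnorm (tket t b + y) 0 = col_sqnorm t 0 + col_sqnorm y 0.
Proof.
move=> b_unit yb0; apply: complexI.
have := congr1 mxtrace (ptraceB_tket_add t b_unit yb0).
rewrite mxtraceD !ptraceB_ketbra !mxtrace_gram big_ord1 -!col_sqnorm_ket_mx => ->.
by rewrite rmorphD.
Qed.

Lemma ptraceB_ketbraZ (r : R) (v : 'cV[C]_(m * n)) :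
  ptraceB (ketbra (r%:C *: v) (r%:C *: v)) = (r ^+ 2)%:C *: ptraceB (ketbra v v).
Proof.
rewrite !ptraceB_ketbra ket_mxZ adj_scale_real -scalemxAl -scalemxAr scalerA.
by rewrite -real_complexM expr2.
Qed.

End Bipartite.

Section PerturbedState.
Variable R : realType.
Local Notation C := R[i].
Local Open Scope complex_scope.
Variables (m n : nat) (a0 : 'cV[C]_m) (b0 : 'cV[C]_n) (phi : 'cV[C]_(m * n)) (eps : R).
Hypothesis b0_unit : braket b0 b0 = 1.
Local Notation x := (contractB b0 phi).
Local Notation y := (phi - tket x b0).
Local Notation t := (a0 + eps%:C *: x).
Local Notation w := (tket a0 b0 + eps%:C *: phi).

Lemma perturbed_split : w = tket t b0 + eps%:C *: y.
Proof. by rewrite tket_addl -addrA -scalerDr subrKC. Qed.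

Lemma perturbation_orthogonal : contractB b0 (eps%:C *: y) = 0.
Proof.
rewrite contractB_ket_mx ket_mxZ -scalemxAl -contractB_ket_mx.
by rewrite contractB_sub_tket // scaler0.
Qed.

Lemma reduced_state_perturbed (s : R) :
  ptraceB (ketbra (s%:C *: w) (s%:C *: w))
    = (s%:C *: t) *m adj (s%:C *: t)
      + (s ^+ 2 * eps ^+ 2)%:C *: ptraceB (ketbra y y).
Proof.
rewrite ptraceB_ketbraZ perturbed_split ptraceB_tket_add ?perturbation_orthogonal //.
rewrite ptraceB_ketbraZ scalerDr scalerA -real_complexM adj_scale_real.
by rewrite -scalemxAl -scalemxAr scalerA -real_complexM expr2.
Qed.

Hypotheses (a0_unit : braket a0 a0 = 1) (phi_unit : braket phi phi = 1).

Lemma normalization_perturbed :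
  1 + eps ^+ 2 + 2 * eps * complex.Re (braket (tket a0 b0) phi)
    = col_sqnorm t 0 + eps ^+ 2 * col_sqnorm y 0.
Proof.
have := Re_braket_add (tket a0 b0) phi eps.
rewrite braket_tket a0_unit b0_unit phi_unit mulr1 /= mulr1 => <-.
rewrite braket_sqnorm perturbed_split col_sqnorm_tket_add ?perturbation_orthogonal //.
by rewrite col_sqnorm_scale.
Qed.

Local Notation N := (1 + eps ^+ 2 + 2 * eps * complex.Re (braket (tket a0 b0) phi)).
Local Notation yy := (complex.Re (braket y y)).
Local Notation mu := (eps ^+ 2 * yy / N).
Local Notation omega := ((yy^-1)%:C *: ptraceB (ketbra y y)).

(* [u u^*] is the [(1 - mu) |v><v|] of the decomposition of [rho_A]. *)
Lemma reduced_state_mixture : 0 < eps -> y != 0 ->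
  exists (u : 'cV[C]_m) (Z : 'M[C]_(m, n)),
  [/\ 0 < mu, col_sqnorm u 0 = 1 - mu, 0 < \sum_l col_sqnorm Z l,
    omega = Z *m adj Z &
    ptraceB (ketbra ((Num.sqrt N)^-1%:C *: w) ((Num.sqrt N)^-1%:C *: w))
      = u *m adj u + mu%:C *: (Z *m adj Z)].
Proof.
move=> eps_gt0 y_neq0.
have yyE : yy = col_sqnorm y 0 by rewrite braket_sqnorm.
have yy_gt0 : 0 < yy by rewrite yyE col_sqnorm_cV_gt0.
have NE : N = col_sqnorm t 0 + eps ^+ 2 * yy by rewrite yyE normalization_perturbed.
have N_gt0 : 0 < N by rewrite NE ltr_wpDl ?col_sqnorm_ge0 ?mulr_gt0 ?exprn_gt0.
pose s := (Num.sqrt N)^-1; have s2 : s ^+ 2 = N^-1 by rewrite exprVn sqr_sqrtr ?ltW.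
pose Z := ket_mx ((Num.sqrt yy)^-1%:C *: y).
have omegaE : omega = Z *m adj Z.
  by rewrite -ptraceB_ketbra ptraceB_ketbraZ exprVn sqr_sqrtr ?ltW.
exists (s%:C *: t), Z; split.
- by rewrite !mulr_gt0 ?exprn_gt0 ?invr_gt0.
- by rewrite col_sqnorm_scale s2 NE; field; rewrite -NE gt_eqF.
- rewrite -col_sqnorm_ket_mx col_sqnorm_scale -yyE exprVn sqr_sqrtr ?ltW //.
  by rewrite mulVf ?gt_eqF.
- exact: omegaE.
rewrite -omegaE scalerA -real_complexM.
have -> : mu * yy^-1 = s ^+ 2 * eps ^+ 2.
  by rewrite s2; field; rewrite (gt_eqF N_gt0) (gt_eqF yy_gt0).
exact: reduced_state_perturbed.
Qed.

End PerturbedState.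

Lemma renyi_bounds (R : realType) p1 p2
    (rho : 'M[R[i]]_p1) (omega : 'M[R[i]]_p2) (alpha mu q : R) :
  0 < alpha < 1 -> 0 < mu -> 0 <= q -> 0 < trpow omega alpha ->
  mu `^ alpha * trpow omega alpha <= trpow rho alpha
    <= q + mu `^ alpha * trpow omega alpha ->
  renyi alpha omega + alpha / (1 - alpha) * ln mu <= renyi alpha rho
    <= (1 - alpha)^-1
       * ln (q + mu `^ alpha * expR ((1 - alpha) * renyi alpha omega)).
Proof.
move=> /andP[a0 a1] mu_gt0 q0 To_gt0 /andP[lo up].
have mua_gt0 : 0 < mu `^ alpha := powR_gt0 _ mu_gt0.
have Trho_gt0 : 0 < trpow rho alpha := lt_le_trans (mulr_gt0 mua_gt0 To_gt0) lo.
have inv_gt0 : 0 < (1 - alpha)^-1 by rewrite invr_gt0 subr_gt0.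
rewrite /renyi; apply/andP; split.
  have : ln (mu `^ alpha * trpow omega alpha) <= ln (trpow rho alpha).
    by rewrite ler_ln ?posrE ?mulr_gt0.
  rewrite lnM ?posrE // ln_powR -(ler_pM2l inv_gt0).
  by rewrite mulrDr addrC mulrA [_^-1 * alpha]mulrC.
rewrite mulrA mulfV ?subr_eq0 1?eq_sym ?lt_eqF // mul1r lnK ?posrE //.
by rewrite ler_pM2l // ler_ln ?posrE // ltr_wpDl ?mulr_gt0.
Qed.

Theorem mainTheorem3 (R : realType) (m n : nat)
    (a0 : 'cV[R[i]]_m) (b0 : 'cV[R[i]]_n) (phi : 'cV[R[i]]_(m * n))
    (eps alpha : R) :
  braket a0 a0 = 1 -> braket b0 b0 = 1 -> braket phi phi = 1 ->
  let ket0 := tket a0 b0 in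
  let x := contractB b0 phi in
  let y := phi - tket x b0 in
  y != 0 ->
  0 < eps < 1 ->
  let N := 1 + eps ^+ 2 + 2 * eps * complex.Re (braket ket0 phi) in
  let psi := ((Num.sqrt N)^-1)%:C%C *: (ket0 + eps%:C%C *: phi) in
  let rhoA := ptraceB (ketbra psi psi) in
  let yy := complex.Re (braket y y) in
  let mu := eps ^+ 2 * yy / N in
  let omega := (yy^-1)%:C%C *: ptraceB (ketbra y y) in
  0 < alpha < 1 ->
  (powR mu alpha * trpow omega alpha <= trpow rhoA alpha
   <= powR (1 - mu) alpha + powR mu alpha * trpow omega alpha)
  /\
  (renyi alpha omega + alpha / (1 - alpha) * ln mu <= renyi alpha rhoA
   <= (1 - alpha)^-1 * ln (powR (1 - mu) alpha
                          + powR mu alpha * expR ((1 - alpha) * renyi alpha omega))).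
Proof.
move=> a0_unit b0_unit phi_unit ket0 x y y_neq0 /andP[eps_gt0 _] N psi rhoA yy mu
  omega alpha01.
have [u [Z [mu_gt0 uE Z_gt0 omegaE rhoAE]]] :
    exists (u : 'cV[R[i]]_m) (Z : 'M[R[i]]_(m, n)),
    [/\ 0 < mu, col_sqnorm u 0 = 1 - mu, 0 < \sum_l col_sqnorm Z l,
      omega = Z *m adj Z & rhoA = u *m adj u + mu%:C%C *: (Z *m adj Z)].
  exact: reduced_state_mixture.
have trace_bounds : powR mu alpha * trpow omega alpha <= trpow rhoA alpha
    <= powR (1 - mu) alpha + powR mu alpha * trpow omega alpha.
  rewrite rhoAE omegaE (trpow_gram_add_ge alpha01 Z u (ltW mu_gt0)) /=.
  by have := trpow_gram_add_le alpha01 Z u (ltW mu_gt0); rewrite big_ord1 uE.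
split; first exact: trace_bounds.
apply: renyi_bounds alpha01 mu_gt0 (powR_ge0 _ _) _ trace_bounds.
by rewrite omegaE; exact: trpow_gram_gt0.
Qed.
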